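(* Fix $K \ge 2$. Let a strategy for stochastic $K$-armed bandits admit a scale-free distribution-free regret bound $\Phi_{\mathrm{free}} : \mathbb{N} \to [0,+\infty)$, i.e., for all real numbers $m < M$, without knowing $m$ or $M$, it ensures $R_T(\underline\nu) \le (M-m)\,\Phi_{\mathrm{free}}(T)$ for every bandit problem $\underline\nu$ in $\mathcal{D}_{m,M}$ and every $T \ge 1$. Assume moreover that $\Phi_{\mathrm{free}}(T) = o(T)$ as $T \to \infty$. Then for every bandit problem $\underline\nu = (\nu_a)_{a\in[K]}$ in $\mathcal{D}_{-,+}$, \[ \liminf_{T\to\infty} \frac{R_T(\underline\nu)}{T/\Phi_{\mathrm{free}}(T)} \ \ge\ \frac{1}{16}\sum_{a=1}^K \Delta_a . \]
   Context: Stochastic $K$-armed bandit: each arm $a \in [K]=\{1,\dots,K\}$ has a distribution $\nu_a$ on $\mathbb{R}$ with a first moment; $\mu_a$ is its mean, $\mu^\star = \max_a \mu_a$, and $\Delta_a = \mu^\star - \mu_a$. At round $t \ge 1$ the player picks $A_t \in [K]$ as a measurable function of $(U_0, Z_1, U_1, \dots, Z_{t-1}, U_{t-1})$, where $U_0, U_1, \dots$ are i.i.d. uniform on $[0,1]$ and independent of everything else, and receives and observes $Z_t$ drawn from $\nu_{A_t}$ independently given $A_t$. The (expected) regret is $R_T(\underline\nu) = T\mu^\star - \mathbb{E}[\sum_{t=1}^T Z_t] = \sum_a \Delta_a\,\mathbb{E}[N_a(T)]$, where $N_a(T)$ is the number of pulls of arm $a$ in rounds $1,\dots,T$. For real $m<M$,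 $\mathcal{D}_{m,M}$ is the set of probability distributions supported on $[m,M]$, and $\mathcal{D}_{-,+} = \bigcup_{m<M} \mathcal{D}_{m,M}$ (bounded distributions with unknown range). A bandit problem in a model $\mathcal{D}$ is a vector $(\nu_a)_{a\in[K]}$ with each $\nu_a\in\mathcal{D}$. *)

From HB Require Import structures.
From mathcomp Require Import all_boot all_order all_algebra.
From mathcomp Require Import all_classical all_reals all_analysis.
Set Implicit Arguments. Unset Strict Implicit. Unset Printing Implicit Defensive.
Import Order.TTheory GRing.Theory Num.Theory.
Local Open Scope classical_set_scope.
Local Open Scope ring_scope.

Definition dist (R : realType) := probability R R.

Definition supported_in (R : realType) (m M : R) (nu : dist R) : Prop :=
  nu `[m, M]%classic = 1%E.

Definition in_Dmm (R : realType) (K : nat) (m M : R) (nu : 'I_K -> dist R) :=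
  forall a, supported_in m M (nu a).
Definition in_Dbounded (R : realType) (K : nat) (nu : 'I_K -> dist R) :=
  exists m M : R, m < M /\ in_Dmm m M nu.

Definition mean (R : realType) (nu : dist R) : R :=
  fine (\int[nu]_x (x%:E))%E.
Definition mustar (R : realType) (K : nat) (nu : 'I_K -> dist R) : R :=
  fine (\big[Order.max/-oo%E]_(a < K) (mean (nu a))%:E).
Definition gap (R : realType) (K : nat) (nu : 'I_K -> dist R) (a : 'I_K) : R :=
  mustar nu - mean (nu a).

(** Histories are encoded as sequences h : nat -> R with
    h 0 = U_0, h (2s-1) = Z_s, h (2s) = U_s.
    A strategy gives, for each round t >= 1, the arm A_t as a function of
    the history; only rounds t >= 1 are used. *)
Definition strategy (R : realType) (K : nat) := nat -> (nat -> R) -> 'I_K.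

Definition coord_sets (R : realType) (n : nat) : set (set (nat -> R)) :=
  [set S | exists i B, (i < n)%N /\ measurable (B : set R) /\
                       S = (fun h : nat -> R => h i) @^-1` B].

(** A_t is a measurable function of (U_0, Z_1, U_1, ..., Z_{t-1}, U_{t-1}),
    i.e. of the first 2t-1 coordinates. *)
Definition measurable_strategy (R : realType) (K : nat) (A : strategy R K) :=
  forall t : nat, (1 <= t)%N -> forall a : 'I_K,
    <<s @coord_sets R (2 * t - 1)%N >> (A t @^-1` [set a]).

Definition ext (R : realType) (h : nat -> R) (i : nat) (v : R) : nat -> R :=
  fun j => if j == i then v else h j.

(** Expected number of pulls of arm a in rounds t, ..., t+n-1, given the
    history h (containing U_0, Z_1, ..., U_{t-1}); Z_t ~ nu_{A_t}
    and U_t ~ Unif[0,1] are drawn independently. *)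
Fixpoint exp_pulls_from (R : realType) (K : nat) (nu : 'I_K -> dist R)
    (A : strategy R K) (a : 'I_K) (n t : nat) (h : nat -> R) {struct n}
    : \bar R :=
  match n with
  | O => 0%E
  | n'.+1 =>
      ((A t h == a)%:R%:E +
       \int[nu (A t h)]_z
         \int[@lebesgue_measure R]_(u in `[0%R, 1%R]%classic)
           exp_pulls_from nu A a n' t.+1
             (ext (ext h (2 * t - 1)%N z) (2 * t)%N u))%E
  end.

Definition exp_pulls (R : realType) (K : nat) (nu : 'I_K -> dist R)
    (A : strategy R K) (a : 'I_K) (T : nat) : \bar R :=
  (\int[@lebesgue_measure R]_(u in `[0%R, 1%R]%classic)
     exp_pulls_from nu A a T 1 (ext (fun _ : nat => 0%R) 0 u))%E.

Definition regret (R : realType) (K : nat) (nu : 'I_K -> dist R)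
    (A : strategy R K) (T : nat) : \bar R :=
  (\sum_(a < K) (gap nu a)%:E * exp_pulls nu A a T)%E.

(* Fix an arm a and a horizon T and move a mass e of nu_a to a far point x >= M, giving
   nu'_a = (1 - e) nu_a + e delta_x.  In the perturbed problem arm a is optimal with a margin
   g = e (x - mu_a) - Delta_a over every other arm, and the problem lies in D_{m,x}, so the
   scale-free bound gives g (T - E'[N_a(T)]) <= (x - m) Phi(T).  The strategy can only notice
   the perturbation by observing x, so E'[N_a(T)] <= (1 + e T) E[N_a(T)].  Taking
   e = 2 psi / T with psi = max(Phi(T), 1), and x so large that (x - m) / g <= 3 / (2 e),
   forces E[N_a(T)] >= T / (4 (1 + 2 psi)) for every arm a, hence
   R_T >= T (sum_a Delta_a) / (4 (1 + 2 psi)).  When Phi(T) >= 1 this is the claimed bound;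
   Phi(T) < 1 for a large T would contradict R_T <= (M - m) Phi(T). *)

From HB Require Import structures.
From mathcomp Require Import all_boot all_order all_algebra.
From mathcomp Require Import all_classical all_reals all_analysis.
From mathcomp Require Import measurable_realfun.
From mathcomp Require Import ring lra.
Import Order.TTheory GRing.Theory Num.Theory.
Local Open Scope classical_set_scope.
Local Open Scope ring_scope.
Set Implicit Arguments.
Unset Strict Implicit.
Unset Printing Implicit Defensive.

Section path_space.
Variable R : realType.

Definition path := nat -> R.
HB.instance Definition _ := gen_eqMixin path.
HB.instance Definition _ := gen_choiceMixin path.
HB.instance Definition _ := isPointed.Build path (fun _ => 0).

Definition cylinders : set (set path) :=
  [set S | exists i (B : set R), measurable B /\ S = (fun h : path => h i) @^-1` B].

Definition path_space : measurableType _ := g_sigma_algebraType cylinders.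

Lemma measurable_coord i : measurable_fun setT (fun h : path_space => h i).
Proof.
move=> _ B mB; rewrite setTI; apply: sub_sigma_algebra; by exists i, B.
Qed.

Lemma measurable_fun_path d (T : measurableType d) (f : T -> path_space) :
  (forall i, measurable_fun setT (fun x => f x i)) -> measurable_fun setT f.
Proof.
move=> mf; apply: (@measurability _ _ T path_space setT f cylinders) => //.
by move=> _ [S [i [B [mB ->]]] <-]; exact: mf i measurableT B mB.
Qed.

Lemma sigma_coord_sets_sub n : <<s @coord_sets R n >> `<=` @measurable _ path_space.
Proof.
apply: smallest_sub; first exact: sigma_algebra_measurable.
by move=> _ [i [B [_ [mB ->]]]]; apply: sub_sigma_algebra; exists i, B.
Qed.

Local Notation LR := (measurableTypeR R).

Lemma measurable_ext2 i j : measurable_fun setT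
  (fun q : (path_space * R) * LR => ext (ext q.1.1 i q.1.2) j q.2 : path_space).
Proof.
apply: measurable_fun_path => k; rewrite /ext.
case: eqP => _; first exact: measurable_snd.
case: eqP => _; first exact: measurableT_comp measurable_snd measurable_fst.
exact: measurableT_comp (measurable_coord k) (measurableT_comp measurable_fst measurable_fst).
Qed.

Lemma measurable_ext0 : measurable_fun setT (fun u : LR => ext (fun _ => 0) 0 u : path_space).
Proof.
apply: measurable_fun_path => k; rewrite /ext.
by case: eqP => _; [exact: measurable_id | exact: measurable_cst].
Qed.

End path_space.

Lemma measurable_fun_select (R : realType) (K : nat) d (T : measurableType d)
    (g : T -> 'I_K) (f : 'I_K -> T -> \bar R) :
  (forall b, measurable (g @^-1` [set b])) -> (forall b, measurable_fun setT (f b)) ->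
  measurable_fun setT (fun x => f (g x) x).
Proof.
move=> mg mf _ Y mY; rewrite setTI.
have -> : (fun x => f (g x) x) @^-1` Y =
    \big[setU/set0]_(b < K) (g @^-1` [set b] `&` (setT `&` f b @^-1` Y)).
  apply/seteqP; split => x /=; rewrite -bigcup_seq.
    by move=> Yx; exists (g x); rewrite /= ?mem_index_enum.
  by move=> [b _ [/= <- [_ ?]]].
by apply: bigsetU_measurable => b _; apply: measurableI => //; exact: mf.
Qed.

Section integral_bounds.
Variables (d : measure_display) (T : measurableType d) (R : realType).
Variables (mu : {measure set T -> \bar R}) (D : set T).
Hypotheses (mD : measurable D) (muD1 : mu D = 1%E).

Lemma integral_cst_unit (r : \bar R) : (\int[mu]_(x in D) cst r x = r)%E.
Proof. by rewrite integral_cst // muD1 mule1. Qed.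

Lemma integral_le_unit (f : T -> \bar R) (c : \bar R) : measurable_fun D f ->
  (forall x, D x -> 0 <= f x)%E -> (forall x, D x -> f x <= c)%E ->
  (\int[mu]_(x in D) f x <= c)%E.
Proof.
move=> mf f0 fc; rewrite -[leRHS]integral_cst_unit.
by apply: ge0_le_integral => //; exact: measurable_cst.
Qed.

Lemma integral_le_scale (f g : T -> \bar R) (k : R) : 0 <= k ->
  measurable_fun D f -> measurable_fun D g ->
  (forall x, D x -> 0 <= f x)%E -> (forall x, D x -> 0 <= g x)%E ->
  (forall x, D x -> f x <= k%:E * g x)%E ->
  (\int[mu]_(x in D) f x <= k%:E * \int[mu]_(x in D) g x)%E.
Proof.
move=> k0 mf mg f0 g0 fg; rewrite -ge0_integralZl //.
apply: ge0_le_integral => //; exact: measurable_funeM.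
Qed.

End integral_bounds.

Lemma supported_integrable (R : realType) (nu0 : dist R) (m M : R) :
  supported_in m M nu0 -> nu0.-integrable setT EFin.
Proof.
move=> supp; have mI : measurable (`[m, M]%classic : set R) by exact: measurable_itv.
have mid : measurable_fun setT (@EFin R) by exact/measurable_EFinP/measurable_id.
have nuC0 : nu0 (~` `[m, M]%classic) = 0%E by rewrite probability_setC // supp subee.
apply/(negligible_integrable (measurableC mI) measurableT mid nuC0).
rewrite setDE setCK setTI.
apply: (@measurable_bounded_integrable _ _ _ _ idfun) => //.
- exact: le_lt_trans (probability_le1 _ mI) (ltry _).
- exact: measurable_id.
- exact/compact_bounded/segment_compact.
Qed.

Lemma supported_inW (R : realType) (nu0 : dist R) (m M M' : R) : M <= M' ->
  supported_in m M nu0 -> supported_in m M' nu0.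
Proof.
move=> MM' supp; apply/eqP; rewrite eq_le probability_le1 ?measurable_itv //=.
rewrite -supp le_measure ?inE ?measurable_itv //.
by move=> z; rewrite /= !in_itv /= => /andP[-> /le_trans]; apply.
Qed.

Section mixture.
Variables (R : realType) (nu0 : dist R) (x e : R).
Hypotheses (e0 : 0 <= e) (e1 : e <= 1).
Let onem_e_ge0 : 0 <= 1 - e. Proof. by rewrite subr_ge0. Qed.

Definition mixture_measure :=
  measure_add (mscale (NngNum onem_e_ge0) nu0) (mscale (NngNum e0) \d_x).
HB.instance Definition _ := Measure.on mixture_measure.

Lemma mixture_measureE S : mixture_measure S = ((1 - e)%:E * nu0 S + e%:E * \d_x S)%E.
Proof. by rewrite /mixture_measure measure_addE. Qed.

Lemma mixture_measure_setT : mixture_measure setT = 1%E.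
Proof. by rewrite mixture_measureE probability_setT diracT !mule1 -EFinD subrK. Qed.

HB.instance Definition _ :=
  Measure_isProbability.Build _ _ _ mixture_measure mixture_measure_setT.

Definition mixture : dist R := mixture_measure.

Lemma ge0_integral_mixture (f : R -> \bar R) :
  measurable_fun setT f -> (forall z, 0 <= f z)%E ->
  (\int[mixture]_z f z = (1 - e)%:E * \int[nu0]_z f z + e%:E * f x)%E.
Proof.
move=> mf f0; rewrite ge0_integral_measure_add // !ge0_integral_mscale //.
by rewrite integral_dirac // diracT mul1e.
Qed.

Lemma mean_mixture : nu0.-integrable setT EFin ->
  mean mixture = (1 - e) * mean nu0 + e * x.
Proof.
move=> nu0_int; have mid : measurable_fun setT (@EFin R).
  exact/measurable_EFinP/measurable_id.
have mpos := measurable_funepos mid; have mneg := measurable_funeneg mid.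
rewrite /mean integralE [in RHS]integralE !ge0_integral_mixture //.
have := integrable_pos_fin_num measurableT nu0_int.
have := integrable_neg_fin_num measurableT nu0_int.
rewrite funeposE funenegE -!EFin_max.
move: (\int[nu0]_z _)%E (\int[nu0]_z _)%E => [p| |] [q| |] //= _ _.
have x_pos_neg : Num.max x 0 - Num.max (- x) 0 = x.
  by rewrite !maxEle; case: ifP; case: ifP; lra.
by rewrite -[X in _ = _ + e * X]x_pos_neg; ring.
Qed.

End mixture.

Section bandit_problem.
Variables (R : realType) (K : nat).
Implicit Types (nu : 'I_K -> dist R) (a b : 'I_K).

Lemma mean_le_mustar nu b : mean (nu b) <= mustar nu.
Proof.
rewrite /mustar; have := le_bigmax -oo%E (fun a => (mean (nu a))%:E) b.
have [a _ ->] := eq_bigmax b xpredT (fun a => (mean (nu a))%:E) isT (fun _ _ => leNye _).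
by rewrite lee_fin.
Qed.

Lemma gap_ge0 nu b : 0 <= gap nu b.
Proof. by rewrite subr_ge0 mean_le_mustar. Qed.

Lemma mustar_eq_mean nu a : (forall b, mean (nu b) <= mean (nu a)) ->
  mustar nu = mean (nu a).
Proof.
move=> a_best; rewrite /mustar.
suff -> : (\big[Order.max/-oo%E]_(b < K) (mean (nu b))%:E = (mean (nu a))%:E)%E by [].
apply/eqP; rewrite eq_le; apply/andP; split; last exact: le_bigmax.
by apply/bigmax_leP; split=> [|b _]; rewrite ?leNye ?lee_fin.
Qed.

Definition perturb nu a (x e : R) (e0 : 0 <= e) (e1 : e <= 1) : 'I_K -> dist R :=
  fun b => if b == a then mixture (nu a) x e0 e1 else nu b.

Section perturbation.
Variables (nu : 'I_K -> dist R) (m M : R) (a : 'I_K) (x e : R).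
Hypotheses (e0 : 0 <= e) (e1 : e <= 1) (mM : m < M) (Mx : M <= x).
Hypothesis nu_supp : in_Dmm m M nu.
Let nu' := perturb nu a x e0 e1.

Lemma perturb_supported : in_Dmm m x nu'.
Proof.
move=> b; rewrite /nu' /perturb; case: eqP => _; last exact: supported_inW (nu_supp b).
rewrite /supported_in /= mixture_measureE (supported_inW Mx (nu_supp a)).
rewrite diracE mem_set ?mule1 -?EFinD ?subrK //.
by rewrite /= in_itv /= lexx andbT (le_trans (ltW mM)).
Qed.

Let margin := e * (x - mean (nu a)) - gap nu a.
Hypothesis margin_ge0 : 0 <= margin.

Lemma perturb_mean_best : mean (nu' a) - mustar nu = margin.
Proof.
rewrite /nu' /perturb eqxx mean_mixture; last exact: supported_integrable (nu_supp a).
by rewrite /margin /gap; ring.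
Qed.

Lemma perturb_mean_other b : b != a -> mean (nu' b) = mean (nu b).
Proof. by rewrite /nu' /perturb => /negPf ->. Qed.

Lemma perturb_mustar : mustar nu' = mean (nu' a).
Proof.
apply: mustar_eq_mean => b; have [-> //|ba] := eqVneq b a.
rewrite perturb_mean_other //.
by have := perturb_mean_best; have := mean_le_mustar nu b; have := margin_ge0; lra.
Qed.

Lemma perturb_gap_best : gap nu' a = 0.
Proof. by rewrite /gap perturb_mustar subrr. Qed.

Lemma perturb_gap_other b : b != a -> margin <= gap nu' b.
Proof.
move=> ba; rewrite /gap perturb_mustar (perturb_mean_other ba).
by have := perturb_mean_best; have := mean_le_mustar nu b; lra.
Qed.

End perturbation.
End bandit_problem.

Lemma fineK_bounded (R : realType) (X : \bar R) (c : R) :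
  (0 <= X)%E -> (X <= c%:E)%E -> (fine X)%:E = X.
Proof. by move=> X0 Xc; rewrite fineK // ge0_fin_numE // (le_lt_trans Xc) ?ltry. Qed.

(* A round of [exp_pulls_from_perturb_le] in which arm [a] is pulled: [I] and [J] are the
   expected continuations under [nu] and under the perturbed problem, [G] the one after
   observing [x]. *)
Lemma mixture_step_le (R : realType) (e n : R) (I J G : \bar R) :
  0 <= e <= 1 -> 0 <= n ->
  (0 <= I <= n%:E)%E -> (0 <= J <= (1 + e * n)%:E * I)%E -> (0 <= G <= n%:E)%E ->
  (1 + ((1 - e)%:E * J + e%:E * G) <= (1 + e * (n + 1))%:E * (1 + I))%E.
Proof.
move=> /andP[e0 e1] n0 /andP[I0 In] /andP[J0 JI] /andP[G0 Gn].
have Ie := esym (fineK_bounded I0 In); rewrite Ie -EFinM in JI.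
have Je := esym (fineK_bounded J0 JI); have Ge := esym (fineK_bounded G0 Gn).
rewrite Ie Je Ge !lee_fin in I0 J0 JI G0 Gn.
rewrite Ie Je Ge -!EFinM -!EFinD lee_fin.
have e_n : 0 <= e * n by exact: mulr_ge0.
have : (1 - e) * fine J <= (1 - e) * ((1 + e * n) * fine I) by apply: ler_wpM2l; lra.
have : e * fine G <= e * n by exact: ler_wpM2l.
nra.
Qed.

Section expected_pulls.
Variables (R : realType) (K : nat) (A : strategy R K).
Hypothesis mA : measurable_strategy A.
Local Notation LR := (measurableTypeR R).
Local Notation leb := (@lebesgue_measure R).
Local Notation I01 := (`[0%R, 1%R]%classic : set R).

Lemma lebesgue_unit_interval : leb I01 = 1%E.
Proof. by rewrite lebesgue_measure_itv /= lte_fin ltr01 sube0. Qed.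

Lemma measurable_integral_ext2 (F : path_space R -> \bar R) i j :
  measurable_fun setT F -> (forall h, 0 <= F h)%E ->
  measurable_fun setT
    (fun p : path_space R * R => \int[leb]_(u in I01) F (ext (ext p.1 i p.2) j u))%E.
Proof.
move=> mF F0.
pose G (q : (path_space R * R) * LR) := F (ext (ext q.1.1 i q.1.2) j q.2).
have -> : (fun p : path_space R * R => \int[leb]_(u in I01) G (p, u))%E =
          fubini_F leb (G \_ (setT `*` I01)).
  apply/funext => p; rewrite /fubini_F [LHS]integral_mkcond.
  by apply: eq_integral => u _; rewrite /patch in_setX in_setT.
apply: measurable_fun_fubini_tonelli_F; last first.
  by move=> q; rewrite /patch; case: ifP => // _; exact: F0.
apply/(measurable_restrictT _ _).1; first exact: measurableX.
apply: measurable_funTS; exact: measurableT_comp mF (measurable_ext2 _ _).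
Qed.

Definition pulls_after nu b n t (p : path_space R * R) : \bar R :=
  (\int[leb]_(u in I01)
     exp_pulls_from nu A b n t.+1 (ext (ext p.1 (2 * t - 1) p.2) (2 * t) u))%E.

Lemma exp_pulls_fromS nu b n t (h : nat -> R) : exp_pulls_from nu A b n.+1 t h =
  ((A t h == b)%:R%:E + \int[nu (A t h)]_z pulls_after nu b n t (h, z))%E.
Proof. by []. Qed.

Lemma exp_pulls_from_ge0 nu b n t h : (0 <= exp_pulls_from nu A b n t h)%E.
Proof.
elim: n t h => [|n IH] t h //=; apply: adde_ge0; first by rewrite lee_fin.
by apply: integral_ge0 => z _; apply: integral_ge0 => u _; exact: IH.
Qed.

Lemma pulls_after_ge0 nu b n t p : (0 <= pulls_after nu b n t p)%E.
Proof. by apply: integral_ge0 => u _; exact: exp_pulls_from_ge0. Qed.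

Lemma measurable_exp_pulls_from nu b n t : (1 <= t)%N ->
  measurable_fun setT (exp_pulls_from nu A b n t : path_space R -> \bar R).
Proof.
elim: n t => [|n IH] t t1; first exact: measurable_cst.
have m_after : measurable_fun setT (pulls_after nu b n t).
  exact: measurable_integral_ext2 (IH t.+1 isT) (@exp_pulls_from_ge0 _ _ _ _).
refine (measurable_fun_select (T := path_space R) (g := A t)
  (f := fun c h => ((c == b)%:R%:E + \int[nu c]_z pulls_after nu b n t (h, z))%E) _ _).
  by move=> c; exact: sigma_coord_sets_sub (mA t1 c).
move=> c; apply: emeasurable_funD; first exact: measurable_cst.
exact: measurable_fun_fubini_tonelli_F m_after (@pulls_after_ge0 _ _ _ _).
Qed.

Lemma measurable_pulls_after nu b n t : measurable_fun setT (pulls_after nu b n t).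
Proof.
exact: measurable_integral_ext2 (measurable_exp_pulls_from _ _ _ (ltn0Sn t))
  (@exp_pulls_from_ge0 _ _ _ _).
Qed.

Lemma measurable_pulls_after_integrand nu b n t h z : measurable_fun I01
  (fun u : LR => exp_pulls_from nu A b n t.+1 (ext (ext h (2 * t - 1) z) (2 * t) u)).
Proof.
apply/measurable_funTS/(measurableT_comp (measurable_exp_pulls_from _ _ _ (ltn0Sn t))).
exact: measurable_fun_pair2 ((h, z) : path_space R * R) (measurable_ext2 _ _).
Qed.

Lemma measurable_pulls_after_pair2 nu b n t h :
  measurable_fun setT (fun z => pulls_after nu b n t (h, z)).
Proof. exact: measurable_fun_pair2 h (measurable_pulls_after _ _ _ _). Qed.

Lemma pulls_after_le nu b n t c p : (forall h, exp_pulls_from nu A b n t.+1 h <= c)%E ->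
  (pulls_after nu b n t p <= c)%E.
Proof.
move=> le_c; apply: (integral_le_unit _ lebesgue_unit_interval) => //.
- exact: measurable_pulls_after_integrand.
- by move=> u _; exact: exp_pulls_from_ge0.
Qed.

Lemma integral_pulls_after_le nu b n t c h (P : dist R) :
  (forall h, exp_pulls_from nu A b n t.+1 h <= c)%E ->
  (\int[P]_z pulls_after nu b n t (h, z) <= c)%E.
Proof.
move=> le_c; apply: (integral_le_unit measurableT (probability_setT _)).
- exact: measurable_pulls_after_pair2.
- by move=> z _; exact: pulls_after_ge0.
- by move=> z _; exact: pulls_after_le.
Qed.

Lemma exp_pulls_from_le nu b n t h : (exp_pulls_from nu A b n t h <= n%:R%:E)%E.
Proof.
elim: n t h => [|n IH] t h; first by [].
rewrite exp_pulls_fromS -nat1r EFinD leeD //; first by rewrite lee_fin; case: eqP.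
exact: integral_pulls_after_le.
Qed.

Lemma sum_exp_pulls_from nu n t h :
  (\sum_(b < K) exp_pulls_from nu A b n t h = n%:R%:E)%E.
Proof.
elim: n t h => [|n IH] t h; first by rewrite big1.
under eq_bigr do rewrite exp_pulls_fromS.
rewrite big_split /= -nat1r EFinD; congr (_ + _)%E.
  rewrite (bigD1 (A t h)) //= eqxx big1 ?adde0 // => b /negPf.
  by rewrite eq_sym => ->.
have sum_after z : (\sum_(b < K) pulls_after nu b n t (h, z) = n%:R%:E)%E.
  rewrite /pulls_after -ge0_integral_sum //; last 2 first.
  - by move=> b; exact: measurable_pulls_after_integrand.
  - by move=> b u _; exact: exp_pulls_from_ge0.
  under eq_integral do rewrite IH.
  exact: integral_cst_unit lebesgue_unit_interval _.
rewrite -ge0_integral_sum //; last 2 first.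
- by move=> b; exact: measurable_pulls_after_pair2.
- by move=> b z _; exact: pulls_after_ge0.
under eq_integral do rewrite sum_after.
exact: integral_cst_unit measurableT (probability_setT _) _.
Qed.

Lemma exp_pulls_from_perturb_le nu a (x e : R) (e0 : 0 <= e) (e1 : e <= 1) n t h :
  (exp_pulls_from (perturb nu a x e0 e1) A a n t h <=
   (1 + e * n%:R)%:E * exp_pulls_from nu A a n t h)%E.
Proof.
set nu' := perturb nu a x e0 e1.
elim: n t h => [|n IH] t h; first by rewrite mule0.
have factor_ge0 : 0 <= 1 + e * n%:R by rewrite addr_ge0 ?mulr_ge0.
have int_after_le (P : dist R) :
    (\int[P]_z pulls_after nu' a n t (h, z) <=
     (1 + e * n%:R)%:E * \int[P]_z pulls_after nu a n t (h, z))%E.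
  apply: (integral_le_scale _ measurableT factor_ge0).
  - exact: measurable_pulls_after_pair2.
  - exact: measurable_pulls_after_pair2.
  - by move=> z _; exact: pulls_after_ge0.
  - by move=> z _; exact: pulls_after_ge0.
  move=> z _; apply: (integral_le_scale _ _ factor_ge0).
  - exact: measurable_itv.
  - exact: measurable_pulls_after_integrand.
  - exact: measurable_pulls_after_integrand.
  - by move=> u _; exact: exp_pulls_from_ge0.
  - by move=> u _; exact: exp_pulls_from_ge0.
  - by move=> u _; exact: IH.
rewrite !exp_pulls_fromS; have [->|Atna] := eqVneq (A t h) a.
  have -> : nu' a = mixture (nu a) x e0 e1 by rewrite /nu' /perturb /= eqxx.
  rewrite ge0_integral_mixture; last 2 first.
  - exact: measurable_pulls_after_pair2.
  - by move=> z; exact: pulls_after_ge0.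
  rewrite -natr1; apply: mixture_step_le; rewrite ?e0 ?e1 ?ler0n //.
  - rewrite integral_ge0 ?integral_pulls_after_le // => [h'|z _].
      exact: exp_pulls_from_le.
    exact: pulls_after_ge0.
  - by rewrite int_after_le integral_ge0 // => z _; exact: pulls_after_ge0.
  - by rewrite pulls_after_ge0 pulls_after_le // => h'; exact: exp_pulls_from_le.
have -> : nu' (A t h) = nu (A t h) by rewrite /nu' /perturb /= (negPf Atna).
rewrite -[(false%:R)%:E]/0%E !add0e.
apply: (le_trans (int_after_le _)); apply: lee_wpmul2r.
  by rewrite integral_ge0 // => z _; exact: pulls_after_ge0.
by rewrite lee_fin lerD2l ler_wpM2l // ler_nat.
Qed.

End expected_pulls.

Section pulls.
Variables (R : realType) (K : nat) (A : strategy R K).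
Hypothesis mA : measurable_strategy A.
Implicit Types (nu : 'I_K -> dist R) (a b : 'I_K).

Lemma measurable_exp_pulls_from_start nu b T :
  measurable_fun setT
    (fun u : measurableTypeR R => exp_pulls_from nu A b T 1 (ext (fun _ => 0) 0 u)).
Proof.
exact: measurableT_comp (measurable_exp_pulls_from mA nu b T (ltnSn 0)) (@measurable_ext0 R).
Qed.

Lemma exp_pulls_ge0 nu b T : (0 <= exp_pulls nu A b T)%E.
Proof. by apply: integral_ge0 => u _; exact: exp_pulls_from_ge0. Qed.

Lemma exp_pulls_le nu b T : (exp_pulls nu A b T <= T%:R%:E)%E.
Proof.
apply: (integral_le_unit _ (lebesgue_unit_interval R)) => //.
- exact: measurable_funTS (measurable_exp_pulls_from_start _ _ _).
- by move=> u _; exact: exp_pulls_from_ge0.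
- by move=> u _; exact: exp_pulls_from_le.
Qed.

Definition pulls nu b T : R := fine (exp_pulls nu A b T).

Lemma exp_pullsE nu b T : exp_pulls nu A b T = (pulls nu b T)%:E.
Proof. exact/esym/(fineK_bounded (exp_pulls_ge0 _ _ _) (exp_pulls_le _ _ _)). Qed.

Lemma pulls_ge0 nu b T : 0 <= pulls nu b T.
Proof. by rewrite -lee_fin -exp_pullsE exp_pulls_ge0. Qed.

Lemma sum_pulls nu T : \sum_(b < K) pulls nu b T = T%:R.
Proof.
apply: EFin_inj; rewrite -sumEFin.
under eq_bigr do rewrite -exp_pullsE.
rewrite -ge0_integral_sum //; last 2 first.
- by move=> b; exact: measurable_funTS (measurable_exp_pulls_from_start _ _ _).
- by move=> b u _; exact: exp_pulls_from_ge0.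
under eq_integral do rewrite (sum_exp_pulls_from mA).
exact: integral_cst_unit (lebesgue_unit_interval R) _.
Qed.

Definition Rregret nu T : R := \sum_(b < K) gap nu b * pulls nu b T.

Lemma regretE nu T : regret nu A T = (Rregret nu T)%:E.
Proof. by rewrite -sumEFin; apply: eq_bigr => b _; rewrite exp_pullsE. Qed.

Lemma Rregret_ge0 nu T : 0 <= Rregret nu T.
Proof. by apply: sumr_ge0 => b _; rewrite mulr_ge0 ?gap_ge0 ?pulls_ge0. Qed.

Lemma margin_le_Rregret nu a g T : gap nu a = 0 -> (forall b, b != a -> g <= gap nu b) ->
  g * (T%:R - pulls nu a T) <= Rregret nu T.
Proof.
move=> gap_a gap_other; rewrite /Rregret (bigD1 a) //= gap_a mul0r add0r.
rewrite -(sum_pulls nu T) (bigD1 a) //= addrC addrK mulr_sumr.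
by apply: ler_sum => b ba; rewrite ler_wpM2r ?pulls_ge0 ?gap_other.
Qed.

Lemma pulls_perturb_le nu a (x e : R) (e0 : 0 <= e) (e1 : e <= 1) T :
  pulls (perturb nu a x e0 e1) a T <= (1 + e * T%:R) * pulls nu a T.
Proof.
rewrite -lee_fin EFinM -!exp_pullsE.
apply: integral_le_scale => //.
- by rewrite addr_ge0 ?mulr_ge0.
- exact: measurable_funTS (measurable_exp_pulls_from_start _ _ _).
- exact: measurable_funTS (measurable_exp_pulls_from_start _ _ _).
- by move=> u _; exact: exp_pulls_from_ge0.
- by move=> u _; exact: exp_pulls_from_ge0.
- by move=> u _; exact: exp_pulls_from_perturb_le.
Qed.

End pulls.

Lemma limn_einf_ge_near (R : realType) (u : nat -> \bar R) (c : \bar R) :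
  (\forall n \near \oo, c <= u n)%E -> (c <= limn_einf u)%E.
Proof.
move=> [N _ cu]; rewrite limn_einf_lim; apply: lime_ge; first exact: is_cvg_einfs.
exists N => // n /= Nn; apply: le_ereal_inf_tmp => _ [k /= nk <-].
exact/cu/(leq_trans Nn nk).
Qed.

Section lower_bound.
Variables (R : realType) (K : nat) (A : strategy R K) (Phi : nat -> R).
Hypothesis mA : measurable_strategy A.
Hypothesis scale_free : forall (m M : R) (nu : 'I_K -> dist R), m < M -> in_Dmm m M nu ->
  forall T : nat, (1 <= T)%N -> (regret nu A T <= ((M - m) * Phi T)%:E)%E.
Variables (nu : 'I_K -> dist R) (m M : R).
Hypotheses (mM : m < M) (nu_supp : in_Dmm m M nu).

Lemma scale_free_perturb T a (x e : R) (e0 : 0 <= e) (e1 : e <= 1) : (1 <= T)%N -> M <= x ->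
  let g := e * (x - mean (nu a)) - gap nu a in 0 <= g ->
  g * (T%:R - (1 + e * T%:R) * pulls A nu a T) <= (x - m) * Phi T.
Proof.
move=> T1 Mx g g0.
have := scale_free (lt_le_trans mM Mx) (perturb_supported a e0 e1 mM Mx nu_supp) T1.
rewrite (regretE mA) lee_fin => /(le_trans _); apply.
apply: le_trans (margin_le_Rregret mA T (perturb_gap_best e0 e1 nu_supp g0)
  (perturb_gap_other e0 e1 nu_supp g0)).
by rewrite ler_wpM2l // lerD2l lerN2 pulls_perturb_le.
Qed.

Lemma pulls_lower_bound T a (psi : R) :
  (1 <= T)%N -> 0 < psi -> Phi T <= psi -> psi <= T%:R / 2 ->
  T%:R <= 4 * (1 + 2 * psi) * pulls A nu a T.
Proof.
move=> T1 psi_gt0 Phi_psi psi_T.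
have T_gt0 : 0 < T%:R :> R by rewrite ltr0n.
set e := 2 * psi / T%:R.
have eT : e * T%:R = 2 * psi by rewrite divfK ?gt_eqF.
have e_gt0 : 0 < e by rewrite divr_gt0 ?mulr_gt0.
have e1 : e <= 1 by rewrite ler_pdivrMr // mul1r; lra.
set D := gap nu a / e; have eD : e * D = gap nu a by rewrite mulrC divfK ?gt_eqF.
(* With this [x] the margin is [e * y] with [2 (x - m) <= 3 y]. *)
set x := Num.max M (3 * mean (nu a) + 3 * D - 2 * m).
have Mx : M <= x by rewrite le_max lexx.
have x_big : 3 * mean (nu a) + 3 * D - 2 * m <= x by rewrite le_max lexx orbT.
set y := x - mean (nu a) - D.
have gE : e * (x - mean (nu a)) - gap nu a = e * y by rewrite -eD /y; ring.
have xm_y : 2 * (x - m) <= 3 * y by rewrite /y; lra.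
have y_gt0 : 0 < y by move: xm_y Mx mM; lra.
have := scale_free_perturb (a := a) (ltW e_gt0) e1 T1 Mx; rewrite /= gE.
move/(_ (mulr_ge0 (ltW e_gt0) (ltW y_gt0))).
set N := pulls A nu a T; rewrite eT => bound.
have bound_y : e * y * (T%:R - (1 + 2 * psi) * N) <= 3 / 2 * y * psi.
  apply: (le_trans bound); apply: (@le_trans _ _ ((x - m) * psi)).
    by rewrite ler_wpM2l // subr_ge0 (le_trans (ltW mM)).
  by rewrite ler_wpM2r ?(ltW psi_gt0) //; lra.
have : e * (T%:R - (1 + 2 * psi) * N) <= 3 / 2 * psi.
  by rewrite -(ler_pM2l y_gt0); move: bound_y; congr (_ <= _); ring.
rewrite -(ler_pM2r T_gt0) -mulrAC eT; move: psi_gt0; nra.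
Qed.

Lemma regret_lower_bound T : (2 <= T)%N -> Phi T <= T%:R / 2 ->
  T%:R * \sum_(a < K) gap nu a <=
    4 * (1 + 2 * Num.max (Phi T) 1) * Rregret A nu T.
Proof.
move=> T2 Phi_T; set psi := Num.max (Phi T) 1.
have T_ge2 : 2 <= T%:R :> R by rewrite (ler_nat R 2 T).
have pulls_ge a : T%:R <= 4 * (1 + 2 * psi) * pulls A nu a T.
  apply: pulls_lower_bound; first exact: leq_trans T2.
  - by rewrite lt_max ltr01 orbT.
  - by rewrite le_max lexx.
  - by rewrite ge_max Phi_T ler_pdivlMr //; lra.
rewrite /Rregret !mulr_sumr; apply: ler_sum => a _.
by rewrite mulrCA mulrC ler_wpM2l ?gap_ge0.
Qed.

(* For such [T], [Phi T < 1] would give [T S <= 12 Rregret <= 12 (M - m) Phi T < 12 (M - m)],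
   while [12 (M - m) < T S]. *)
Lemma scaled_regret_lower_bound T : (2 <= T)%N -> Phi T <= T%:R / 2 ->
  let S := \sum_(a < K) gap nu a in 0 < S -> 12 * (M - m) / S < T%:R ->
  1 / 16 * S <= Rregret A nu T * (Phi T / T%:R).
Proof.
move=> T2 Phi_T S S_gt0 T_large; set Rg := Rregret A nu T.
have T_gt0 : 0 < T%:R :> R by rewrite ltr0n (leq_trans _ T2).
have Rg_le : Rg <= (M - m) * Phi T.
  by rewrite -lee_fin -(regretE mA) scale_free // (leq_trans _ T2).
have Rg_ge0 : 0 <= Rg := Rregret_ge0 mA nu T.
have := regret_lower_bound T2 Phi_T; rewrite -/S -/Rg.
case: (lerP 1 (Phi T)) => Phi1 low.
  by rewrite mulrA ler_pdivlMr //; move: Phi1 low Rg_ge0; nra.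
move: T_large; rewrite ltr_pdivrMr // mulrC.
by move: mM Phi1 low Rg_le; nra.
Qed.

End lower_bound.

Theorem theorem1 (R : realType) (K : nat) (A : strategy R K) (Phi : nat -> R) :
  (2 <= K)%N ->
  measurable_strategy A ->
  (forall T, 0 <= Phi T) ->
  (forall (m M : R) (nu : 'I_K -> dist R), m < M -> in_Dmm m M nu ->
     forall T : nat, (1 <= T)%N ->
       (regret nu A T <= ((M - m) * Phi T)%:E)%E) ->
  (fun T : nat => Phi T / T%:R) @ \oo --> 0 ->
  forall nu : 'I_K -> dist R, in_Dbounded nu ->
    ((1 / 16 * \sum_(a < K) gap nu a)%:E <=
       limn_einf (fun T : nat => regret nu A T * (Phi T / T%:R)%:E))%E.
Proof.
move=> _ mA Phi_ge0 scale_free Phi_o nu [m [M [mM nu_supp]]].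
apply: limn_einf_ge_near; set S := \sum_(a < K) gap nu a.
have : 0 <= S by apply: sumr_ge0 => a _; exact: gap_ge0.
rewrite le0r => /predU1P[S0|S_gt0].
  apply: nearW => T; rewrite S0 mulr0 (regretE mA) -EFinM lee_fin.
  by rewrite mulr_ge0 ?divr_ge0 ?Rregret_ge0.
near=> T.
have T2 : (2 <= T)%N by near: T; exact: nbhs_infty_ge.
have Phi_T : Phi T / T%:R < 1 / 2 by near: T; apply: (cvgr_lt _ Phi_o); rewrite divr_gt0.
have T_large : 12 * (M - m) / S < T%:R by near: T; exact: nbhs_infty_gtr.
rewrite (regretE mA) -EFinM lee_fin (scaled_regret_lower_bound mA scale_free mM nu_supp) //.
by move: Phi_T; rewrite ltr_pdivrMr ?ltr0n ?(leq_trans _ T2) // ler_pdivlMr //; lra.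
Unshelve. all: by end_near.
Qed.
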